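(* Let $R\in[0,\tfrac34]$ and let $S_1\subseteq S$ be the set of offline vertices covered by the advice $A$. Run the algorithm described in the context with $$f_j(x)=f_{\mathsf U}(x):=\min\Bigl\{\frac{1-R}{1-x},1\Bigr\}\ \ (j\in S\setminus S_1),\qquad f_j(x)=f_{\mathsf L}(x):=\max\Bigl\{1-\frac{1-R}{x},0\Bigr\}\ \ (j\in S_1).$$ Then for every instance $G$ and advice $A$, $$\mathsf{ALG}(G,A)\ \ge\ \bigl(2\sqrt{1-R}-(1-R)\bigr)\cdot\mathsf{ADVICE}(G,A),$$ i.e. the algorithm is $C$-consistent with $C=2\sqrt{1-R}-(1-R)$, equivalently $\sqrt{1-R}+\sqrt{1-C}=1$.
   Context: Setting (two-stage vertex-weighted bipartite matching with advice). A bipartite graph $G=(D,S,E)$ has offline vertices $S$, each $j\in S$ carrying a weight $w_j\ge 0$, and online vertices $D=D_1\sqcup D_2$ arriving in two stages. $E_1$ (resp. $E_2$) denotes the set of edges between $D_1$ (resp. $D_2$) and $S$. The advice is a matching $A\subseteq E_1$; $S_1\subseteq S$ denotes the set of offline vertices covered by $A$. $\mathsf{ADVICE}(G,A)=\sum_{j\in S_1}w_j+\max\{\sum_{j\text{ covered by }M}w_j: M\subseteq E_2\text{ a matching covering no vertex of }S_1\}$ (the value of following the advice exactly in the first stage and then matching optimally). Algorithm (parameters: functions $f_j:[0,1]\to[0,1]$, $j\in S$). First stage: after $D_1,E_1,A$ are revealed, let $\bar x$ be an optimal solution of (P1): maximize $\sum_{j\in S} w_j\bigl(x_j-\int_0^{x_j}f_j(t)\,dt\bigr)$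 subject to $x_i:=\sum_{j:(i,j)\in E_1}x_{ij}\le 1$ ($i\in D_1$), $x_j:=\sum_{i:(i,j)\in E_1}x_{ij}\le 1$ ($j\in S$), $x_{ij}\ge0$. Second stage: after $D_2,E_2$ are revealed, let $\bar y$ be an optimal solution of (P2): maximize $\sum_{j\in S}w_jy_j$ subject to $y_i:=\sum_{j:(i,j)\in E_2}y_{ij}\le 1$ ($i\in D_2$), $y_j:=\sum_{i:(i,j)\in E_2}y_{ij}\le 1-\bar x_j$ ($j\in S$), $y_{ij}\ge 0$. The algorithm's value is $\mathsf{ALG}(G,A)=\sum_{j\in S}w_j(\bar x_j+\bar y_j)$. *)

From HB Require Import structures.
From mathcomp Require Import all_boot all_order all_algebra.
From mathcomp Require Import all_classical all_reals all_analysis.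
Set Implicit Arguments. Unset Strict Implicit. Unset Printing Implicit Defensive.
Import Order.TTheory GRing.Theory Num.Theory.
Local Open Scope ring_scope.
Local Open Scope classical_set_scope.

Section TwoStage.
Context {R : realType} {D1 D2 S : finType}.

Definition is_matching {I : finType} (E M : {set I * S}) : bool :=
  (M \subset E) &&
  [forall e in M, forall e' in M,
     (e != e') ==> ((e.1 != e'.1) && (e.2 != e'.2))].

Definition covered {I : finType} (M : {set I * S}) : {set S} :=
  [set j | [exists i, (i, j) \in M]].

Definition mweight (w : S -> R) (T : {set S}) : R := \sum_(j in T) w j.

Definition ADVICE (w : S -> R) (E2 : {set D2 * S}) (A : {set D1 * S}) : R :=
  mweight w (covered A) +
  \big[Num.max/0]_(M : {set D2 * S} |
                     is_matching E2 M && [disjoint covered M & covered A])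
     mweight w (covered M).

Definition frac_feasible {I : finType} (E : {set I * S}) (cap : S -> R)
  (x : I -> S -> R) : Prop :=
  [/\ (forall i j, 0 <= x i j),
      (forall i j, (i, j) \notin E -> x i j = 0),
      (forall i, \sum_(j : S) x i j <= 1) &
      (forall j, \sum_(i : I) x i j <= cap j)].

Definition load {I : finType} (x : I -> S -> R) (j : S) : R :=
  \sum_(i : I) x i j.

Definition P1_obj (w : S -> R) (f : S -> R -> R) (x : D1 -> S -> R) : R :=
  \sum_(j : S) w j * (load x j -
     \int[lebesgue_measure]_(t in `[0, load x j]) f j t).

Definition P1_optimal (w : S -> R) (f : S -> R -> R) (E1 : {set D1 * S})
  (x : D1 -> S -> R) : Prop :=
  frac_feasible E1 (fun _ => 1) x /\
  forall x', frac_feasible E1 (fun _ => 1) x' -> P1_obj w f x' <= P1_obj w f x.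

Definition P2_obj (w : S -> R) (y : D2 -> S -> R) : R :=
  \sum_(j : S) w j * load y j.

Definition P2_optimal (w : S -> R) (E2 : {set D2 * S}) (xbar : D1 -> S -> R)
  (y : D2 -> S -> R) : Prop :=
  frac_feasible E2 (fun j => 1 - load xbar j) y /\
  forall y', frac_feasible E2 (fun j => 1 - load xbar j) y' ->
    P2_obj w y' <= P2_obj w y.

Definition ALG (w : S -> R) (x : D1 -> S -> R) (y : D2 -> S -> R) : R :=
  \sum_(j : S) w j * (load x j + load y j).

End TwoStage.

Definition fU {R : realType} (Rp : R) (x : R) : R :=
  Num.min ((1 - Rp) / (1 - x)) 1.
Definition fL {R : realType} (Rp : R) (x : R) : R :=
  Num.max (1 - (1 - Rp) / x) 0.

From HB Require Import structures.
From mathcomp Require Import all_boot all_order all_algebra.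
From mathcomp Require Import all_classical all_reals all_analysis.
From mathcomp Require Import ring lra.
Set Implicit Arguments. Unset Strict Implicit. Unset Printing Implicit Defensive.
Import Order.TTheory GRing.Theory Num.Theory.
Local Open Scope ring_scope.

(* The objective of (P1) is concave, so xbar satisfies the first-order
   optimality condition against the advice matching A: with x_j the load of j,
   sum_(j in S1) w_j (1 - f_j(x_j)) <= sum_j w_j (1 - f_j(x_j)) x_j.  (The
   thresholds are (1 - R)^-1-Lipschitz, which makes this quantitative.)  The
   second stage may complete xbar along any matching M of D2 avoiding S1,
   filling the residual capacities 1 - x_j, hence
   ALG >= sum_j w_j x_j + sum_(j in M) w_j (1 - x_j).  Splitting
   x_j = (1 - f_j(x_j)) x_j + x_j f_j(x_j), a vertex of S1 earns at least
   1 - (1 - x) fL(x) and a vertex of M at least 1 - x (1 - fU(x)); both are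
   >= C = 2 sqrt(1 - R) - (1 - R) by AM-GM.  Maximising over M gives
   ALG >= C * ADVICE. *)

Section nondecreasing_integral.
Local Open Scope classical_set_scope.
Context {R : realType}.
Notation mu := (@lebesgue_measure R).

Lemma nondecreasing_integrable_itv (g : R -> R) s t (a b : R) :
  nondecreasing_fun g ->
  mu.-integrable [set` Interval (BSide s a) (BSide t b)] (EFin \o g).
Proof.
move=> g_nd; have itvP x : x \in Interval (BSide s a) (BSide t b) -> a <= x <= b.
  rewrite in_itv /=; case: s; case: t => /= /andP[ax xb];
  by rewrite ?(ltW ax) ?(ltW xb) ?ax ?xb.
apply: measurable_bounded_integrable; first exact: measurable_itv.
- suff : (mu [set` Interval (BSide s a) (BSide t b)] < +oo)%E by [].
  by rewrite lebesgue_measure_itv; case: ifP => // _; rewrite -EFinD ltry.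
- exact: measurable_realfun.nondecreasing_measurable.
rewrite /bounded_near; near=> M => x /= /itvP /andP[ax xb].
have Mga : `|g a| <= M by near: M; exact/nbhs_pinfty_ge/num_real.
have Mgb : `|g b| <= M by near: M; exact/nbhs_pinfty_ge/num_real.
rewrite ler_norml; apply/andP; split.
- apply: le_trans (g_nd _ _ ax); rewrite lerNl; apply: le_trans Mga.
  by rewrite -normrN ler_norm.
- by apply: le_trans (g_nd _ _ xb) (le_trans (ler_norm _) Mgb).
Unshelve. all: end_near.
Qed.

Lemma nondecreasing_Rintegral_increment (g : R -> R) (a u v : R) :
  nondecreasing_fun g -> a <= u -> u <= v ->
  (v - u) * g u <= \int[mu]_(t in `[a, v]) g t - \int[mu]_(t in `[a, u]) g t
   <= (v - u) * g v.
Proof.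
move=> g_nd au uv; rewrite Rintegral_itvB ?bnd_simp ?(le_trans au) //;
  last exact: nondecreasing_integrable_itv.
have mu_uv : fine (mu `]u, v]) = v - u.
  rewrite lebesgue_measure_itv /=; case: ifP => // /negbT.
  by rewrite lte_fin -leNgt => vu; apply/eqP; rewrite eq_sym subr_eq0 eq_le uv vu.
have cst_int c : \int[mu]_(t in `]u, v]) c = (v - u) * c.
  by rewrite Rintegral_cst ?mu_uv 1?mulrC //; exact: measurable_itv.
have int_uv := @nondecreasing_integrable_itv g false false u v g_nd.
have int_cst c : mu.-integrable `]u, v] (EFin \o cst c).
  exact: nondecreasing_integrable_itv.
have m_uv : measurable `]u, v] by exact: measurable_itv.
rewrite -!cst_int; apply/andP; split.
- apply: le_Rintegral => //; first exact: int_cst.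
  by move=> x /=; rewrite in_itv /= => /andP[/ltW ux _]; exact: g_nd.
- apply: le_Rintegral => //; first exact: int_cst.
  by move=> x /=; rewrite in_itv /= => /andP[_ xv]; exact: g_nd.
Qed.

Lemma nondecreasing_lipschitz_primitive_increment (g : R -> R) (K a u v : R) :
  nondecreasing_fun g -> (forall x y, x <= y -> g y - g x <= K * (y - x)) ->
  a <= u -> a <= v ->
  (v - u) * (1 - g u) - K * (v - u) ^+ 2 <=
  (v - \int[mu]_(t in `[a, v]) g t) - (u - \int[mu]_(t in `[a, u]) g t).
Proof.
move=> g_nd g_lip au av; have [uv|/ltW vu] := leP u v.
- have /andP[_ le_int] := nondecreasing_Rintegral_increment g_nd au uv.
  have := g_lip _ _ uv; have : 0 <= v - u by rewrite subr_ge0.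
  by nra.
- have /andP[ge_int _] := nondecreasing_Rintegral_increment g_nd av vu.
  have := g_lip _ _ vu; have : 0 <= u - v by rewrite subr_ge0.
  by nra.
Qed.

Lemma eq_Rintegral_itv_bounded (f g : R -> R) (x y : R) (b0 b1 : bool) :
  measurable_fun `]x, y[ g -> {in `]x, y[%R, f =1 g} ->
  \int[mu]_(t in [set` Interval (BSide b0 x) (BSide b1 y)]) f t =
  \int[mu]_(t in [set` Interval (BSide b0 x) (BSide b1 y)]) g t.
Proof.
move=> mg fg; rewrite /Rintegral (eq_integral_itv_bounded _ _ _ mg) //.
by apply: eq_measurable_fun mg => t /[!inE] tI; rewrite fg.
Qed.

End nondecreasing_integral.

Section advice_thresholds.
Context {R : realType}.
Variable Rp : R.

(* [fL] and [fU] take junk values where they divide by zero ([fL 0 = 1] and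
   [fU 1 = 0]), so they are not monotone on [0, 1]; [fLpw] and [fUpw] are
   their monotone versions, which agree with them on ]0, 1] and [0, 1[. *)
Definition fLpw (x : R) : R := if x <= 1 - Rp then 0 else 1 - (1 - Rp) / x.
Definition fUpw (x : R) : R := 1 - fLpw (1 - x).

Lemma fU_fL x : fU Rp x = 1 - fL Rp (1 - x).
Proof.
rewrite /fU /fL; set c := _ / _; have [c1|/ltW c1] := leP c 1.
- by rewrite max_l ?subr_ge0 // subKr.
- by rewrite max_r ?subr_le0 // subr0.
Qed.

Lemma fL_fLpw x : 0 < x -> fL Rp x = fLpw x.
Proof.
move=> x0; rewrite /fL /fLpw; case: ifP => [xc|/negbT]; last rewrite -ltNge => cx.
- by apply: max_r; rewrite subr_le0 ler_pdivlMr // mul1r.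
- by apply: max_l; rewrite subr_ge0 ler_pdivrMr ?mul1r // ?ltW // (le_lt_trans _ cx).
Qed.

Lemma fU_fUpw x : x < 1 -> fU Rp x = fUpw x.
Proof. by move=> x1; rewrite fU_fL fL_fLpw // subr_gt0. Qed.

Lemma fLpw_nd : Rp < 1 -> nondecreasing_fun fLpw.
Proof.
move=> Rp_lt1 x y xy; rewrite /fLpw.
have [xc|cx] := leP x (1 - Rp); have [yc|cy] := leP y (1 - Rp) => //.
- by rewrite subr_ge0 ler_pdivrMr; lra.
- by lra.
- rewrite lerD2l lerN2 ler_pdivrMr; last lra.
  by rewrite mulrAC ler_pdivlMr; nra.
Qed.

Lemma fLpw_lipschitz x y : Rp < 1 -> x <= y ->
  fLpw y - fLpw x <= (1 - Rp)^-1 * (y - x).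
Proof.
move=> Rp_lt1 xy; set c := 1 - Rp; have c0 : 0 < c by rewrite subr_gt0.
set k := c^-1; have kc : k * c = 1 by rewrite mulVf // lt0r_neq0.
have k0 : 0 < k by rewrite invr_gt0.
suff : c * (fLpw y - fLpw x) <= y - x by nra.
rewrite /fLpw -/c; have [xc|cx] := leP x c; have [yc|cy] := leP y c.
- by lra.
- have qy : c / y * y = c by rewrite divfK // lt0r_neq0 // (lt_trans c0).
  have q1 : c / y <= 1 by rewrite ler_pdivrMr; lra.
  by nra.
- by lra.
- have px : c / x * x = c by rewrite divfK // lt0r_neq0 // (lt_trans c0).
  have qy : c / y * y = c by rewrite divfK // lt0r_neq0 // (lt_trans c0).
  have p1 : c / x <= 1 by rewrite ler_pdivrMr; lra.
  have q1 : c / y <= 1 by rewrite ler_pdivrMr; lra.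
  have p0 : 0 <= c / x by rewrite divr_ge0 // ltW // (lt_trans c0).
  have q0 : 0 <= c / y by rewrite divr_ge0 // ltW // (lt_trans c0).
  set p := c / x in px p1 p0 *; set q := c / y in qy q1 q0 *.
  have -> : c * (1 - q - (1 - p)) = p * q * (y - x).
    have e1 : p * q * y = p * c by rewrite -mulrA qy.
    have e2 : p * q * x = q * c by rewrite mulrAC px mulrC.
    by nra.
  have pq1 : p * q <= 1 by rewrite -[1]mulr1 ler_pM.
  by rewrite ler_piMl // subr_ge0.
Qed.

Lemma fUpw_nd : Rp < 1 -> nondecreasing_fun fUpw.
Proof. by move=> Rp_lt1 x y xy; rewrite lerD2l lerN2 fLpw_nd // lerD2l lerN2. Qed.

Lemma fUpw_lipschitz x y : Rp < 1 -> x <= y ->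
  fUpw y - fUpw x <= (1 - Rp)^-1 * (y - x).
Proof.
move=> Rp_lt1 xy.
have -> : fUpw y - fUpw x = fLpw (1 - x) - fLpw (1 - y) by rewrite /fUpw; ring.
have -> : y - x = 1 - x - (1 - y) by ring.
by rewrite fLpw_lipschitz // lerD2l lerN2.
Qed.

Lemma fLpw_gain x : Rp <= 1 ->
  2 * Num.sqrt (1 - Rp) - (1 - Rp) <= 1 - (1 - x) * fLpw x.
Proof.
move=> Rp_le1; set s := Num.sqrt (1 - Rp).
have s2 : s ^+ 2 = 1 - Rp by rewrite sqr_sqrtr // subr_ge0.
have : 0 <= (1 - s) ^+ 2 by exact: sqr_ge0.
rewrite /fLpw; have [//|cx] := leP x (1 - Rp); first by nra.
have x0 : 0 < x by rewrite (le_lt_trans _ cx) // subr_ge0.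
have px : (1 - Rp) / x * x = 1 - Rp by rewrite divfK // lt0r_neq0.
(* AM-GM: x + (1 - Rp) / x >= 2 s *)
have : 0 <= (x - s) ^+ 2 by exact: sqr_ge0.
set p := (1 - Rp) / x in px *.
by nra.
Qed.

Lemma fUpw_gain x : Rp <= 1 ->
  2 * Num.sqrt (1 - Rp) - (1 - Rp) <= 1 - x * (1 - fUpw x).
Proof.
move=> Rp_le1; rewrite /fUpw subKr.
by have := fLpw_gain (1 - x) Rp_le1; rewrite subKr.
Qed.

Lemma fLpw_ge0_le1 x : Rp <= 1 -> 0 <= fLpw x <= 1.
Proof.
move=> Rp_le1; rewrite /fLpw; have [//|cx] := leP x (1 - Rp); first by rewrite lexx ler01.
have x0 : 0 < x by rewrite (le_lt_trans _ cx) // subr_ge0.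
apply/andP; split; first by rewrite subr_ge0 ler_pdivrMr // mul1r ltW.
by rewrite lerBlDr lerDl divr_ge0 // ?subr_ge0 // ltW.
Qed.

Lemma fUpw_ge0_le1 x : Rp <= 1 -> 0 <= fUpw x <= 1.
Proof.
move=> Rp_le1; have /andP[g0 g1] := fLpw_ge0_le1 (1 - x) Rp_le1.
by rewrite /fUpw subr_ge0 g1 lerBlDr lerDl g0.
Qed.

End advice_thresholds.

Lemma sum_if_unique {V : nmodType} {T : finType} (P : pred T) (F : T -> V) :
  (forall k k', P k -> P k' -> k = k') ->
  \sum_k (if P k then F k else 0) = if [pick k | P k] is Some k then F k else 0.
Proof.
move=> P_uniq; case: pickP => [k Pk | noP]; last by rewrite big1 // => k _; rewrite noP.
rewrite (bigD1 k) //= Pk big1 ?addr0 // => k' /negPf k'k.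
by case: ifP => // Pk'; move/eqP: k'k; rewrite (P_uniq _ _ Pk' Pk).
Qed.

Lemma sum_lerp {R : pzRingType} {T : finType} (F G : T -> R) (t : R) :
  \sum_k (F k + t * (G k - F k)) = \sum_k F k + t * (\sum_k G k - \sum_k F k).
Proof. by rewrite big_split /= -mulr_sumr sumrB. Qed.

Section fractional_matchings.
Context {R : realType} {I S : finType}.
Implicit Types (E M : {set I * S}) (cap c : S -> R) (x a : I -> S -> R).

Lemma matching_fst_inj E M i j j' :
  is_matching E M -> (i, j) \in M -> (i, j') \in M -> j = j'.
Proof.
move=> /andP[_ /forallP Mm] ijM ij'M.
move: (Mm (i, j)) => /implyP /(_ ijM) /forallP /(_ (i, j')) /implyP /(_ ij'M).
by case: (eqVneq (i, j) (i, j')) => [[]//| _ /=]; rewrite eqxx.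
Qed.

Lemma matching_snd_inj E M i i' j :
  is_matching E M -> (i, j) \in M -> (i', j) \in M -> i = i'.
Proof.
move=> /andP[_ /forallP Mm] ijM i'jM.
move: (Mm (i, j)) => /implyP /(_ ijM) /forallP /(_ (i', j)) /implyP /(_ i'jM).
by case: (eqVneq (i, j) (i', j)) => [[]//| _ /=]; rewrite eqxx andbF.
Qed.

Definition scaled_matching M c : I -> S -> R :=
  fun i j => if (i, j) \in M then c j else 0.

Lemma load_scaled_matching E M c j : is_matching E M ->
  load (scaled_matching M c) j = if j \in covered M then c j else 0.
Proof.
move=> Mm; rewrite /load (@sum_if_unique _ _ (fun i => (i, j) \in M)); last first.
  by move=> i i'; exact: matching_snd_inj Mm.
case: pickP => [i ijM | noM]; first by rewrite inE; case: existsP => // -[]; exists i.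
by rewrite inE; case: existsP => // -[i]; rewrite noM.
Qed.

Lemma scaled_matching_feasible E M c cap : is_matching E M ->
  (forall j, 0 <= c j <= 1) -> (forall j, c j <= cap j) ->
  frac_feasible E cap (scaled_matching M c).
Proof.
move=> Mm c01 c_cap; split => [i j | i j ijE | i | j].
- by rewrite /scaled_matching; case: ifP => // _; case/andP: (c01 j).
- rewrite /scaled_matching; case: ifP => // ijM.
  by case/andP: Mm => /fintype.subsetP /(_ _ ijM); rewrite (negPf ijE).
- rewrite (@sum_if_unique _ _ (fun j => (i, j) \in M)); last first.
    by move=> j j'; exact: matching_fst_inj Mm.
  by case: pickP => // j _; case/andP: (c01 j).
- rewrite -/(load _ j) (load_scaled_matching _ _ Mm); case: ifP => // _.
  by case/andP: (c01 j) => c0 _; exact: le_trans (c_cap j).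
Qed.

Lemma frac_feasible_load E cap x j : frac_feasible E cap x -> 0 <= load x j <= cap j.
Proof. by case=> x0 _ _ x_cap; rewrite x_cap sumr_ge0. Qed.

Lemma frac_feasible_lerp E cap x a t :
  frac_feasible E cap x -> frac_feasible E cap a -> 0 <= t <= 1 ->
  frac_feasible E cap (fun i j => x i j + t * (a i j - x i j)).
Proof.
move=> [x0 xE x_row x_col] [a0 aE a_row a_col] /andP[t0 t1].
have lerp_le (u v b : R) : u <= b -> v <= b -> u + t * (v - u) <= b by nra.
split => [i j | i j ijE | i | j].
- by have := x0 i j; have := a0 i j; nra.
- by rewrite xE // aE // subrr mulr0 addr0.
- by rewrite sum_lerp lerp_le.
- by rewrite sum_lerp lerp_le.
Qed.

End fractional_matchings.

Lemma le0_of_le_scaled {R : realFieldType} (L K : R) :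
  0 <= K -> (forall t, 0 < t <= 1 -> L <= t * K) -> L <= 0.
Proof.
move=> K0 LtK; rewrite leNgt; apply/negP => L0.
have LK0 : 0 < L + K by rewrite ltr_wpDr.
have t0 : 0 < L / (L + K) by rewrite divr_gt0.
have t1 : L / (L + K) <= 1 by rewrite ler_pdivrMr // mul1r lerDl.
have := LtK (L / (L + K)); rewrite t0 t1 mulrAC ler_pdivlMr // => /(_ isT).
by nra.
Qed.

Lemma le_mul_add_bigmax {R : realFieldType} {T : finType} (P : pred T) (F : T -> R)
    (a B C : R) :
  0 < C -> C * a <= B -> (forall i, P i -> C * (a + F i) <= B) ->
  C * (a + \big[Num.max/0]_(i | P i) F i) <= B.
Proof.
move=> C0 CaB CFB; rewrite mulrC -ler_pdivlMr // addrC -lerBrDr.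
apply: bigmax_le => [|i Pi]; first by rewrite subr_ge0 ler_pdivlMr // mulrC.
by rewrite lerBrDr ler_pdivlMr // mulrC addrC CFB.
Qed.

Section second_stage.
Context {R : realType} {D1 D2 S : finType}.

Lemma ALG_ge_matching_completion (w : S -> R) (E2 M : {set D2 * S})
    (xbar : D1 -> S -> R) (ybar : D2 -> S -> R) :
  (forall j, 0 <= load xbar j <= 1) -> P2_optimal w E2 xbar ybar ->
  is_matching E2 M ->
  \sum_j w j * load xbar j + \sum_(j in covered M) w j * (1 - load xbar j)
  <= ALG w xbar ybar.
Proof.
move=> x01 [_ ybar_opt] Mm.
have c01 j : 0 <= 1 - load xbar j <= 1.
  by case/andP: (x01 j) => x0 x1; rewrite subr_ge0 x1 lerBlDr lerDl.
have -> : ALG w xbar ybar = \sum_j w j * load xbar j + P2_obj w ybar.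
  by rewrite /ALG /P2_obj -big_split; apply: eq_bigr => j _; rewrite mulrDr.
rewrite lerD2l; apply: le_trans (ybar_opt _ (scaled_matching_feasible Mm c01 _)) => //.
rewrite /P2_obj big_mkcond; apply: ler_sum => j _.
by rewrite (load_scaled_matching _ _ Mm); case: ifP; rewrite ?mulr0.
Qed.

End second_stage.

Section first_stage.
Context {R : realType} {D1 S : finType}.
Variables (w : S -> R) (g : S -> R -> R) (K : R).
Hypotheses (w_ge0 : forall j, 0 <= w j) (g_nd : forall j, nondecreasing_fun (g j))
  (g_lip : forall j x y, x <= y -> g j y - g j x <= K * (y - x)).

Lemma P1_obj_eq_in (f : S -> R -> R) (x : D1 -> S -> R) :
  (forall j, {in `]0, 1[, f j =1 g j}) -> (forall j, 0 <= load x j <= 1) ->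
  P1_obj w f x = P1_obj w g x.
Proof.
move=> fg x01; apply: eq_bigr => j _; congr (_ * (_ - _)).
rewrite (@eq_Rintegral_itv_bounded _ (f j) (g j) 0 (load x j) true false) //.
  exact: measurable_realfun.nondecreasing_measurable.
move=> t; rewrite in_itv /= => /andP[t0 tx]; apply: fg.
by rewrite in_itv /= t0 (lt_le_trans tx) //; case/andP: (x01 j).
Qed.

Lemma P1_obj_increment (x z : D1 -> S -> R) :
  (forall j, 0 <= load x j) -> (forall j, 0 <= load z j) ->
  \sum_j w j * ((load z j - load x j) * (1 - g j (load x j))
                - K * (load z j - load x j) ^+ 2)
  <= P1_obj w g z - P1_obj w g x.
Proof.
move=> x0 z0; rewrite /P1_obj -sumrB; apply: ler_sum => j _; rewrite -mulrBr.
apply: ler_wpM2l; first exact: w_ge0.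
exact: nondecreasing_lipschitz_primitive_increment (g_nd j) (g_lip j) (x0 j) (z0 j).
Qed.

Lemma P1_optimal_first_order (f : S -> R -> R) (E1 : {set D1 * S})
    (xbar a : D1 -> S -> R) :
  0 <= K -> (forall j, {in `]0, 1[, f j =1 g j}) ->
  P1_optimal w f E1 xbar -> frac_feasible E1 (fun=> 1) a ->
  \sum_j w j * (1 - g j (load xbar j)) * (load a j - load xbar j) <= 0.
Proof.
move=> K0 fg [x_feas x_opt] a_feas.
have load01 (z : D1 -> S -> R) j : frac_feasible E1 (fun=> 1) z -> 0 <= load z j <= 1.
  exact: frac_feasible_load.
have x01 j := load01 _ j x_feas; have a01 j := load01 _ j a_feas.
have W0 : 0 <= \sum_j w j by apply: sumr_ge0 => j _; exact: w_ge0.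
(* Compare xbar with xbar + t (a - xbar): the Lipschitz bound makes the
   second-order error at most K t^2 sum_j w_j. *)
apply: (le0_of_le_scaled (mulr_ge0 K0 W0)).
move=> t /andP[t0 t1].
pose xt i j := xbar i j + t * (a i j - xbar i j).
have xt_feas : frac_feasible E1 (fun=> 1) xt.
  by apply: frac_feasible_lerp => //; rewrite ltW.
have load_xt j : load xt j - load xbar j = t * (load a j - load xbar j).
  by rewrite /load sum_lerp addrAC subrr add0r.
have xt01 j := load01 _ j xt_feas.
have := x_opt _ xt_feas; rewrite (P1_obj_eq_in fg xt01) (P1_obj_eq_in fg x01) => opt.
have := P1_obj_increment (fun j => proj1 (andP (x01 j))) (fun j => proj1 (andP (xt01 j))).
under eq_bigr do rewrite load_xt.
have opt0 : P1_obj w g xt - P1_obj w g xbar <= 0 by rewrite subr_le0.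
move=> /le_trans /(_ opt0) incr.
rewrite -subr_le0 -(pmulr_rle0 _ t0); apply: le_trans incr.
rewrite mulrBr !mulr_sumr -sumrB; apply: ler_sum => j _.
have /andP[x0 x1] := x01 j; have /andP[a0 a1] := a01 j.
set d := load a j - load xbar j.
have d2 : d ^+ 2 <= 1 by rewrite /d; nra.
have : 0 <= K * w j * t ^+ 2 * (1 - d ^+ 2).
  apply: mulr_ge0; last by rewrite subr_ge0.
  by apply: mulr_ge0; [apply: mulr_ge0 => //; exact: w_ge0 | exact: sqr_ge0].
by nra.
Qed.

End first_stage.

Section advice.
Context {R : realType} {D1 D2 S : finType}.
Variables (Rp : R) (w : S -> R) (E1 A : {set D1 * S}).
Hypotheses (Rp_lt1 : Rp < 1) (w_ge0 : forall j, 0 <= w j) (A_matching : is_matching E1 A).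

Definition advice_threshold (j : S) : R -> R :=
  if j \in covered A then fLpw Rp else fUpw Rp.

Lemma advice_threshold_nd j : nondecreasing_fun (advice_threshold j).
Proof.
by rewrite /advice_threshold; case: ifP => _; [exact: fLpw_nd | exact: fUpw_nd].
Qed.

Lemma advice_threshold_lipschitz j x y : x <= y ->
  advice_threshold j y - advice_threshold j x <= (1 - Rp)^-1 * (y - x).
Proof.
rewrite /advice_threshold; case: ifP => _;
  [exact: fLpw_lipschitz | exact: fUpw_lipschitz].
Qed.

Lemma advice_threshold_eq_in j :
  {in `]0, 1[, (if j \in covered A then fL Rp else fU Rp) =1 advice_threshold j}.
Proof.
move=> x; rewrite in_itv /= => /andP[x0 x1]; rewrite /advice_threshold.
by case: ifP => _; [exact: fL_fLpw | exact: fU_fUpw].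
Qed.

Lemma advice_threshold_first_order (xbar : D1 -> S -> R) :
  P1_optimal w (fun j => if j \in covered A then fL Rp else fU Rp) E1 xbar ->
  \sum_(j in covered A) w j * (1 - advice_threshold j (load xbar j))
  <= \sum_j w j * (1 - advice_threshold j (load xbar j)) * load xbar j.
Proof.
move=> x_opt.
have a_feas : frac_feasible E1 (fun=> 1) (scaled_matching A (fun=> 1 : R)).
  by apply: scaled_matching_feasible A_matching _ _ => j; rewrite ?ler01 lexx.
have K0 : 0 <= (1 - Rp)^-1 by rewrite invr_ge0 subr_ge0 ltW.
have first_order := P1_optimal_first_order w_ge0 advice_threshold_nd
  advice_threshold_lipschitz K0 advice_threshold_eq_in x_opt a_feas.
rewrite -subr_le0 big_mkcond -sumrB; apply: le_trans first_order.
rewrite le_eqVlt; apply/orP; left; apply/eqP/eq_bigr => j _.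
by rewrite (load_scaled_matching _ _ A_matching); case: ifP => _; ring.
Qed.

Lemma ALG_ge_advice_completion (E2 M : {set D2 * S})
    (xbar : D1 -> S -> R) (ybar : D2 -> S -> R) :
  P1_optimal w (fun j => if j \in covered A then fL Rp else fU Rp) E1 xbar ->
  P2_optimal w E2 xbar ybar ->
  is_matching E2 M -> [disjoint covered M & covered A] ->
  (2 * Num.sqrt (1 - Rp) - (1 - Rp)) * (mweight w (covered A) + mweight w (covered M))
  <= ALG w xbar ybar.
Proof.
move=> x_opt y_opt Mm MA; set C := _ - _.
have x01 j : 0 <= load xbar j <= 1 by exact: frac_feasible_load x_opt.1.
apply: le_trans (ALG_ge_matching_completion x01 y_opt Mm).
have := advice_threshold_first_order x_opt; set g := advice_threshold.
have -> : \sum_j w j * load xbar j = \sum_j w j * (1 - g j (load xbar j)) * load xbar j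
    + \sum_j w j * load xbar j * g j (load xbar j).
  by rewrite -big_split; apply: eq_bigr => j _ /=; ring.
suff : C * (mweight w (covered A) + mweight w (covered M)) <=
    \sum_(j in covered A) w j * (1 - g j (load xbar j))
    + \sum_j w j * load xbar j * g j (load xbar j)
    + \sum_(j in covered M) w j * (1 - load xbar j) by lra.
rewrite /mweight mulrDr !mulr_sumr !(big_mkcond (mem (covered _))) -!big_split.
apply: ler_sum => j _ /=; have /andP[x0 x1] := x01 j; have Rp_le1 := ltW Rp_lt1.
rewrite /g /advice_threshold; case: ifP => jA; case: ifP => jM.
- by rewrite (disjointFl MA jA) in jM.
- have := ler_wpM2l (w_ge0 j) (fLpw_gain (load xbar j) Rp_le1).
  set u := fLpw Rp _; rewrite !addr0 mulrC.
  suff -> : w j * (1 - u) + w j * load xbar j * u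
            = w j * (1 - (1 - load xbar j) * u) by [].
  by ring.
- have := ler_wpM2l (w_ge0 j) (fUpw_gain (load xbar j) Rp_le1).
  set u := fUpw Rp _; rewrite !add0r mulrC.
  suff -> : w j * load xbar j * u + w j * (1 - load xbar j)
            = w j * (1 - load xbar j * (1 - u)) by [].
  by ring.
- have /andP[g0 _] := fUpw_ge0_le1 (load xbar j) Rp_le1.
  by rewrite !add0r addr0 !mulr_ge0 ?w_ge0.
Qed.

End advice.

Theorem theorem2 (R : realType) (D1 D2 S : finType) (Rp : R)
  (w : S -> R) (E1 : {set D1 * S}) (E2 : {set D2 * S}) (A : {set D1 * S})
  (xbar : D1 -> S -> R) (ybar : D2 -> S -> R) :
  0 <= Rp <= 3 / 4 ->
  (forall j, 0 <= w j) ->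
  is_matching E1 A ->
  P1_optimal w (fun j => if j \in covered A then fL Rp else fU Rp) E1 xbar ->
  P2_optimal w E2 xbar ybar ->
  ALG w xbar ybar >= (2 * Num.sqrt (1 - Rp) - (1 - Rp)) * ADVICE w E2 A.
Proof.
move=> /andP[Rp0 Rp34] w_ge0 A_matching x_opt y_opt.
have Rp_lt1 : Rp < 1 by lra.
have completion := ALG_ge_advice_completion Rp_lt1 w_ge0 A_matching x_opt y_opt.
have C0 : 0 < 2 * Num.sqrt (1 - Rp) - (1 - Rp).
  have s0 : 0 < Num.sqrt (1 - Rp) by rewrite sqrtr_gt0 subr_gt0.
  have s2 : Num.sqrt (1 - Rp) ^+ 2 = 1 - Rp by rewrite sqr_sqrtr // subr_ge0 ltW.
  by nra.
apply: le_mul_add_bigmax => // [|M /andP[]]; last exact: completion.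
have cover0 : covered (finset.set0 : {set D2 * S}) = finset.set0.
  by apply/setP => j; rewrite !inE; apply/existsP => -[i]; rewrite inE.
have := completion finset.set0; rewrite cover0 /mweight big_set0 addr0; apply.
- by rewrite /is_matching finset.sub0set; apply/forallP => e; rewrite inE.
- by apply/pred0P => j; rewrite !inE.
Qed.
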